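(* Let $f:(0,\infty)\to\mathbb{R}$ be defined by $$f(t)=\frac{e^{-t}}{-\log(1-e^{-t})}.$$ Then $f$ is nondecreasing on $(0,\infty)$, $\lim_{t\to0}f(t)=0$, $\lim_{t\to\infty}f(t)=1$, $1-f(t)\sim e^{-t}/2$ as $t\to\infty$, and $$\int_0^\infty\big(1-f(t)\big)\,dt=\gamma,$$ where $\gamma=-\Gamma'(1)$ is the Euler–Mascheroni constant.
   Context: $g\sim h$ means $g/h\to1$. *)

From Stdlib Require Import Reals.
From Coquelicot Require Import Coquelicot.
Open Scope R_scope.

Definition fE (t : R) : R := exp (- t) / (- ln (1 - exp (- t))).

Definition Gamma (s : R) : R :=
  RInt_gen (fun t => Rpower t (s - 1) * exp (- t)) (at_right 0) (Rbar_locally p_infty).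

Definition euler_gamma : R := - Derive Gamma 1.

From Stdlib Require Import Reals Lra.
From Coquelicot Require Import Coquelicot.
Open Scope R_scope.

(* Write u = e^{-t} and L(t) = -ln(1 - e^{-t}), so that f = u / L.  Everything rests on
   the elementary bounds u <= L <= u/(1-u) on (0,1) and u + u^2/2 <= L <= u + u^2/2 + u^3
   for u <= 1/2:
   - f' = u (u/(1-u) - L) / L^2 >= 0, so f is nondecreasing;
   - f <= 1/L <= 1/(-ln t) tends to 0 at 0+, and the third-order bounds give f -> 1 and
     (1 - f)/(u/2) -> 1 at +oo.
   For the integral let E(y) = int_1^y e^{-s}/s ds.  Then t + E(L(t)) is a primitive of 1 - f;
   its limit at 0+ is cinf = E(+oo) and its limit at +oo is c0 = lim_{0+} (E(y) - ln y), so
   int_0^oo (1 - f) = c0 - cinf.  On the other side Gamma(1+h) = int t^h e^{-t}; writing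
   t^h e^{-t} = e^{-t} + h ln t e^{-t} + O(h^2 ln^2 t e^{-t}) and integrating ln t e^{-t} with
   the primitive E(x) - e^{-x} ln x gives Gamma(1+h) = 1 + h (cinf - c0) + O(h^2), hence
   Gamma'(1) = cinf - c0 = - int_0^oo (1 - f). *)

Lemma exp_le x y : x <= y -> exp x <= exp y.
Proof. intros [H|H]; [left; apply exp_increasing; auto | subst; lra]. Qed.

Lemma ln_le_sub1 x : 0 < x -> ln x <= x - 1.
Proof. intros Hx. pose proof (exp_ineq1_le (ln x)). rewrite exp_ln in H; lra. Qed.

Lemma sqrt_lt_of_lt_sq y e : 0 < e -> 0 <= y -> y < e * e -> sqrt y < e.
Proof.
  intros He Hy Hye. pose proof (sqrt_sqrt y Hy). pose proof (sqrt_pos y).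
  destruct (Rlt_or_le (sqrt y) e); auto. nra.
Qed.

Lemma sqrt_exp t : 0 < t -> sqrt t = exp (ln t / 2).
Proof.
  intros Ht. apply sqrt_lem_1; [lra | left; apply exp_pos |].
  rewrite <- exp_plus. replace (ln t / 2 + ln t / 2) with (ln t) by field. apply exp_ln; auto.
Qed.

Lemma is_derive_continuous (f : R -> R) x l : is_derive f x l -> continuous f x.
Proof.
  intros H. apply (ex_derive_continuous (K:=R_AbsRing) (V:=R_NormedModule)). exists l; exact H.
Qed.

Lemma nondecreasing_of_derive (f df : R -> R) a b : a <= b ->
  (forall x, a <= x <= b -> is_derive f x (df x)) ->
  (forall x, a <= x <= b -> 0 <= df x) -> f a <= f b.
Proof.
  intros Hab Hd Hpos.
  destruct (MVT_gen f a b df) as [c [Hc Heq]];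
    rewrite ?Rmin_left, ?Rmax_right in * by lra.
  - intros x Hx. apply Hd. lra.
  - intros x Hx. apply continuity_pt_filterlim, (is_derive_continuous f x (df x)), Hd. lra.
  - specialize (Hpos c Hc). nra.
Qed.

Lemma exp_taylor2 y : Rabs (exp y - 1 - y) <= y^2 * exp (Rabs y).
Proof.
  destruct (MVT_gen (fun s => exp s - s) 0 y (fun s => exp s - 1)) as [c [Hc Hc']].
  - intros x _. auto_derive; auto. ring.
  - intros x _. apply continuity_pt_filterlim, (is_derive_continuous (fun s => exp s - s) x (exp x - 1)).
    auto_derive; auto. ring.
  - destruct (MVT_gen exp 0 c exp) as [d [Hd Hd']].
    + intros x _. apply is_derive_exp.
    + intros x _. apply derivable_continuous_pt, derivable_pt_exp.
    + simpl in Hc'. rewrite exp_0 in Hc', Hd'.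
      assert (E : exp y - 1 - y = exp d * c * y).
      { replace (exp y - 1 - y) with (exp y - y - (1 - 0)) by ring. rewrite Hc', Hd'. ring. }
      assert (Hcy : Rabs c <= Rabs y).
      { revert Hc. unfold Rmin, Rmax. destruct (Rle_dec 0 y); split_Rabs; lra. }
      assert (Hdc : Rabs d <= Rabs c).
      { revert Hd. unfold Rmin, Rmax. destruct (Rle_dec 0 c); split_Rabs; lra. }
      assert (Hed : exp d <= exp (Rabs y)) by (apply exp_le; revert Hcy Hdc; split_Rabs; lra).
      rewrite E, !Rabs_mult, (Rabs_pos_eq (exp d)) by (left; apply exp_pos).
      rewrite <- (pow2_abs y).
      pose proof (Rabs_pos y). pose proof (Rabs_pos c). pose proof (exp_pos d).
      assert (Rabs c * Rabs y <= Rabs y ^ 2) by nra.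
      nra.
Qed.

Lemma exp_ge_quadratic v : 0 <= v -> 1 + v + v^2/2 <= exp v.
Proof.
  intros Hv.
  assert (H : (fun s => exp s - 1 - s - s^2/2) 0 <= (fun s => exp s - 1 - s - s^2/2) v).
  { apply (nondecreasing_of_derive (fun s => exp s - 1 - s - s^2/2) (fun s => exp s - 1 - s) 0 v Hv).
    - intros x _. auto_derive; auto. field.
    - intros x _. pose proof (exp_ineq1_le x). lra. }
  simpl in H. rewrite exp_0 in H. lra.
Qed.

(* A crude polynomial-versus-exponential bound, used to absorb powers of ln t. *)
Lemma sq_le_exp w : 0 <= w -> w^2 <= 32 * exp (w / 4).
Proof. intros Hw. pose proof (exp_ge_quadratic (w/4) ltac:(lra)). nra. Qed.

Lemma is_derive_of_quadratic_bound (F : R -> R) x c D C delta : 0 < delta ->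
  (forall h, Rabs h <= delta -> Rabs (F (x + h) - c - h * D) <= C * h^2) ->
  is_derive F x D.
Proof.
  intros Hdelta Hquad.
  assert (Hc : F x = c).
  { specialize (Hquad 0 ltac:(rewrite Rabs_R0; lra)).
    rewrite Rplus_0_r in Hquad. revert Hquad. split_Rabs; nra. }
  apply is_derive_Reals. intros eps Heps.
  assert (Hd : 0 < Rmin delta (eps / (Rabs C + 1))).
  { apply Rmin_glb_lt; [lra|]. apply Rdiv_lt_0_compat; [lra|]. pose proof (Rabs_pos C). lra. }
  exists (mkposreal _ Hd). intros h Hh0 Hh. simpl in Hh.
  pose proof (Rmin_l delta (eps / (Rabs C + 1))). pose proof (Rmin_r delta (eps / (Rabs C + 1))).
  specialize (Hquad h ltac:(lra)). rewrite Hc.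
  assert (Hpos : 0 < Rabs h) by (apply Rabs_pos_lt; auto).
  replace ((F (x + h) - c) / h - D) with ((F (x + h) - c - h * D) / h) by (field; auto).
  rewrite Rabs_div by auto. apply Rlt_div_l; [lra|].
  rewrite <- pow2_abs in Hquad. pose proof (Rabs_pos C). pose proof (Rle_abs C).
  assert (Hsmall : Rabs h < eps / (Rabs C + 1)) by lra.
  apply Rlt_div_r in Hsmall; [|lra].
  nra.
Qed.

Lemma lim_right0_iff (F : R -> R) l :
  filterlim F (at_right 0) (locally l) <->
  (forall eps, 0 < eps -> exists d, 0 < d /\ forall x, 0 < x < d -> Rabs (F x - l) < eps).
Proof.
  split.
  - intros H eps Heps.
    destruct (H (fun y => Rabs (y - l) < eps)) as [d Hd].
    { exists (mkposreal eps Heps). intros y Hy. exact Hy. }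
    exists d. split; [apply cond_pos|]. intros x [Hx1 Hx2]. apply Hd; [| lra].
    change (Rabs (x - 0) < d). rewrite Rminus_0_r, Rabs_pos_eq; lra.
  - intros H P [eps HP].
    destruct (H eps (cond_pos eps)) as [d [Hd Hx]].
    exists (mkposreal d Hd). intros y Hy Hy0. apply HP, Hx.
    change (Rabs (y - 0) < d) in Hy. rewrite Rminus_0_r, Rabs_pos_eq in Hy; lra.
Qed.

Lemma lim_pinfty_iff (F : R -> R) l :
  filterlim F (Rbar_locally p_infty) (locally l) <->
  (forall eps, 0 < eps -> exists M, forall x, M < x -> Rabs (F x - l) < eps).
Proof.
  split.
  - intros H eps Heps.
    destruct (H (fun y => Rabs (y - l) < eps)) as [M HM].
    { exists (mkposreal eps Heps). intros y Hy. exact Hy. }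
    exists M. exact HM.
  - intros H P [eps HP]. destruct (H eps (cond_pos eps)) as [M HM].
    exists M. intros x Hx. apply HP, HM, Hx.
Qed.

Lemma cauchy_right0 (F : R -> R) :
  (forall eps, 0 < eps -> exists d, 0 < d /\
     forall x y, 0 < x < d -> 0 < y < d -> Rabs (F x - F y) < eps) ->
  exists l, filterlim F (at_right 0) (locally l).
Proof.
  intros H.
  apply (proj1 (filterlim_locally_cauchy (U := R_CompleteSpace) (F := at_right 0) F)).
  intros eps. destruct (H eps (cond_pos eps)) as [d [Hd Hxy]].
  exists (fun x => 0 < x < d). split.
  - exists (mkposreal d Hd). intros y Hy Hy0. change (Rabs (y - 0) < d) in Hy.
    rewrite Rminus_0_r, Rabs_pos_eq in Hy; lra.
  - intros u v Hu Hv. change (Rabs (F v - F u) < eps). apply Hxy; auto.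
Qed.

Lemma cauchy_pinfty (F : R -> R) :
  (forall eps, 0 < eps -> exists M, forall x y, M < x -> M < y -> Rabs (F x - F y) < eps) ->
  exists l, filterlim F (Rbar_locally p_infty) (locally l).
Proof.
  intros H.
  apply (proj1 (filterlim_locally_cauchy (U := R_CompleteSpace) (F := Rbar_locally p_infty) F)).
  intros eps. destruct (H eps (cond_pos eps)) as [M HM].
  exists (fun x => M < x). split.
  - exists M. auto.
  - intros u v Hu Hv. change (Rabs (F v - F u) < eps). apply HM; auto.
Qed.

Lemma lim_right0_abs_le F l B : filterlim F (at_right 0) (locally l) ->
  (exists d, 0 < d /\ forall x, 0 < x < d -> Rabs (F x) <= B) -> Rabs l <= B.
Proof.
  intros H [d [Hd HB]]. apply Rnot_lt_le. intro Hlt.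
  destruct (proj1 (lim_right0_iff F l) H (Rabs l - B)) as [d' [Hd' Hx]]; [lra|].
  set (x := Rmin d d' / 2).
  assert (0 < Rmin d d') by (apply Rmin_glb_lt; lra).
  pose proof (Rmin_l d d'). pose proof (Rmin_r d d').
  specialize (HB x ltac:(unfold x; lra)). specialize (Hx x ltac:(unfold x; lra)).
  revert HB Hx Hlt. split_Rabs; lra.
Qed.

Lemma lim_pinfty_abs_le F l B : filterlim F (Rbar_locally p_infty) (locally l) ->
  (exists M, forall x, M < x -> Rabs (F x) <= B) -> Rabs l <= B.
Proof.
  intros H [M HB]. apply Rnot_lt_le. intro Hlt.
  destruct (proj1 (lim_pinfty_iff F l) H (Rabs l - B)) as [M' Hx]; [lra|].
  set (x := Rmax M M' + 1).
  pose proof (Rmax_l M M'). pose proof (Rmax_r M M').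
  specialize (HB x ltac:(unfold x; lra)). specialize (Hx x ltac:(unfold x; lra)).
  revert HB Hx Hlt. split_Rabs; lra.
Qed.

Lemma filterlim_Rplus {F : (R -> Prop) -> Prop} {FF : Filter F} (f g : R -> R) a b :
  filterlim f F (locally a) -> filterlim g F (locally b) ->
  filterlim (fun x => f x + g x) F (locally (a + b)).
Proof.
  intros Hf Hg. exact (filterlim_comp_2 f g Rplus Hf Hg (filterlim_plus (V:=R_NormedModule) a b)).
Qed.

Lemma filterlim_Rmult_l {F : (R -> Prop) -> Prop} {FF : Filter F} (f : R -> R) h a :
  filterlim f F (locally a) -> filterlim (fun x => h * f x) F (locally (h * a)).
Proof.
  intros Hf. eapply filterlim_comp; [exact Hf | exact (filterlim_scal_r (V:=R_NormedModule) h a)].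
Qed.

Lemma is_RInt_gen_primitive (g F : R -> R) l0 l1 :
  (forall a b, 0 < a -> 0 < b -> is_RInt g a b (F b - F a)) ->
  filterlim F (at_right 0) (locally l0) ->
  filterlim F (Rbar_locally p_infty) (locally l1) ->
  is_RInt_gen g (at_right 0) (Rbar_locally p_infty) (l1 - l0).
Proof.
  intros HI H0 H1 P [eps HP].
  assert (He2 : 0 < eps/2) by (destruct eps; simpl; lra).
  destruct (proj1 (lim_right0_iff F l0) H0 _ He2) as [d [Hd Hx]].
  destruct (proj1 (lim_pinfty_iff F l1) H1 _ He2) as [M HM].
  apply (Filter_prod _ _ _ (fun a => 0 < a < d) (fun b => Rmax M 0 < b)).
  - exists (mkposreal d Hd). intros y Hy Hy0. change (Rabs (y - 0) < d) in Hy.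
    rewrite Rminus_0_r, Rabs_pos_eq in Hy; lra.
  - exists (Rmax M 0). auto.
  - intros a b Ha Hb. pose proof (Rmax_l M 0). pose proof (Rmax_r M 0).
    exists (F b - F a). split; [apply HI; lra|].
    apply HP. change (Rabs (F b - F a - (l1 - l0)) < eps).
    specialize (Hx a Ha). specialize (HM b ltac:(lra)). revert Hx HM. split_Rabs; lra.
Qed.

Lemma is_RInt_abs_le_primitive (g k K : R -> R) a b I : a <= b -> is_RInt g a b I ->
  (forall t, a <= t <= b -> Rabs (g t) <= k t) ->
  (forall t, a <= t <= b -> is_derive K t (k t)) ->
  (forall t, a <= t <= b -> continuous k t) ->
  Rabs I <= K b - K a.
Proof.
  intros Hab HI Hg HK Hk.
  apply (norm_RInt_le g k a b I (K b - K a) Hab Hg HI).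
  apply (is_RInt_derive K k a b); rewrite Rmin_left, Rmax_right by lra; auto.
Qed.

Section PrimitiveOnPositiveReals.

Variable g : R -> R.
Hypothesis g_cont : forall t, 0 < t -> continuous g t.

Lemma RInt1_derive y : 0 < y -> is_derive (RInt g 1) y (g y).
Proof.
  intros Hy. apply (is_derive_RInt g (RInt g 1) 1 y); [| apply g_cont; lra].
  exists (mkposreal (y/2) ltac:(lra)). intros b Hb. change (Rabs (b - y) < y/2) in Hb.
  apply (RInt_correct (V := R_CompleteNormedModule)),
        (ex_RInt_continuous (V := R_CompleteNormedModule)).
  intros z Hz. apply g_cont.
  assert (0 < Rmin 1 b) by (apply Rmin_glb_lt; revert Hb; split_Rabs; lra). lra.
Qed.

Lemma RInt1_is_RInt a b : 0 < a -> 0 < b -> is_RInt g a b (RInt g 1 b - RInt g 1 a).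
Proof.
  intros Ha Hb. assert (0 < Rmin a b) by (apply Rmin_glb_lt; lra).
  apply (is_RInt_derive (RInt g 1) g a b); intros x Hx.
  - apply RInt1_derive. lra.
  - apply g_cont. lra.
Qed.

Lemma RInt1_at_1 : RInt g 1 1 = 0.
Proof. exact (RInt_point (V := R_CompleteNormedModule) 1 g). Qed.

Lemma RInt1_lim_right0_dominated C : 0 <= C ->
  (forall t, 0 < t <= 1 -> Rabs (g t) <= C / sqrt t) ->
  exists l0, filterlim (RInt g 1) (at_right 0) (locally l0) /\ Rabs l0 <= 2 * C.
Proof.
  intros HC Hdom.
  assert (Hs : forall t, 0 <= t <= 1 -> 0 <= sqrt t <= 1).
  { intros t Ht. split; [apply sqrt_pos|]. rewrite <- sqrt_1. apply sqrt_le_1; lra. }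
  assert (Hinc : forall x y, 0 < x <= y -> y <= 1 ->
            Rabs (RInt g 1 y - RInt g 1 x) <= 2 * C * sqrt y - 2 * C * sqrt x).
  { intros x y Hx Hy.
    apply (is_RInt_abs_le_primitive g (fun t => C / sqrt t) (fun t => 2 * C * sqrt t) x y);
      try lra.
    - apply RInt1_is_RInt; lra.
    - intros t Ht. apply Hdom; lra.
    - intros t Ht. assert (0 < sqrt t) by (apply sqrt_lt_R0; lra).
      auto_derive; [lra|]. field. lra.
    - intros t Ht. assert (0 < sqrt t) by (apply sqrt_lt_R0; lra).
      apply (ex_derive_continuous (K:=R_AbsRing) (V:=R_NormedModule)).
      auto_derive. lra. }
  destruct (cauchy_right0 (RInt g 1)) as [l0 Hl0].
  { intros eps Heps. set (e := eps / (2 * C + 1)).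
    assert (0 < e) by (unfold e; apply Rdiv_lt_0_compat; lra).
    assert (2 * C * e < eps).
    { unfold e. apply (Rmult_lt_reg_r (2*C+1)); [lra|]. field_simplify; [|lra]. nra. }
    exists (Rmin 1 (e * e)). split; [apply Rmin_glb_lt; nra|].
    intros x y Hx Hy. pose proof (Rmin_l 1 (e*e)). pose proof (Rmin_r 1 (e*e)).
    assert (sqrt x < e) by (apply sqrt_lt_of_lt_sq; lra).
    assert (sqrt y < e) by (apply sqrt_lt_of_lt_sq; lra).
    pose proof (Hs x ltac:(lra)). pose proof (Hs y ltac:(lra)).
    destruct (Rle_or_lt x y) as [Hxy|Hxy].
    - specialize (Hinc x y ltac:(lra) ltac:(lra)). rewrite Rabs_minus_sym. nra.
    - specialize (Hinc y x ltac:(lra) ltac:(lra)). nra. }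
  exists l0. split; [exact Hl0|].
  apply (lim_right0_abs_le _ l0 _ Hl0). exists 1. split; [lra|]. intros x Hx.
  specialize (Hinc x 1 ltac:(lra) ltac:(lra)).
  rewrite RInt1_at_1, sqrt_1, Rabs_minus_sym, Rminus_0_r in Hinc.
  pose proof (Hs x ltac:(lra)). nra.
Qed.

Lemma RInt1_lim_pinfty_dominated C : 0 <= C ->
  (forall t, 1 <= t -> Rabs (g t) <= C * exp (- t / 2)) ->
  exists l1, filterlim (RInt g 1) (Rbar_locally p_infty) (locally l1) /\ Rabs l1 <= 2 * C.
Proof.
  intros HC Hdom.
  assert (Hinc : forall x y, 1 <= x <= y ->
            Rabs (RInt g 1 y - RInt g 1 x) <= 2 * C * exp (- x / 2) - 2 * C * exp (- y / 2)).
  { intros x y Hx.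
    replace (2 * C * exp (- x / 2) - 2 * C * exp (- y / 2))
      with (- 2 * C * exp (- y / 2) - (- 2 * C * exp (- x / 2))) by ring.
    apply (is_RInt_abs_le_primitive g (fun t => C * exp (- t / 2))
             (fun t => - 2 * C * exp (- t / 2)) x y); try lra.
    - apply RInt1_is_RInt; lra.
    - intros t Ht. apply Hdom; lra.
    - intros t Ht. auto_derive; [auto|]. unfold Rdiv. field.
    - intros t Ht. apply (ex_derive_continuous (K:=R_AbsRing) (V:=R_NormedModule)).
      auto_derive. auto. }
  assert (He : forall t, 0 < exp t) by apply exp_pos.
  destruct (cauchy_pinfty (RInt g 1)) as [l1 Hl1].
  { intros eps Heps. set (e := eps / (2 * C + 1)).
    assert (0 < e) by (unfold e; apply Rdiv_lt_0_compat; lra).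
    assert (2 * C * e < eps).
    { unfold e. apply (Rmult_lt_reg_r (2*C+1)); [lra|]. field_simplify; [|lra]. nra. }
    exists (Rmax 1 (- 2 * ln e)). intros x y Hx Hy.
    pose proof (Rmax_l 1 (- 2 * ln e)). pose proof (Rmax_r 1 (- 2 * ln e)).
    assert (exp (- x / 2) <= e) by (rewrite <- (exp_ln e) by lra; apply exp_le; lra).
    assert (exp (- y / 2) <= e) by (rewrite <- (exp_ln e) by lra; apply exp_le; lra).
    pose proof (He (-x/2)). pose proof (He (-y/2)).
    destruct (Rle_or_lt x y) as [Hxy|Hxy].
    - specialize (Hinc x y ltac:(lra)). rewrite Rabs_minus_sym. nra.
    - specialize (Hinc y x ltac:(lra)). nra. }
  exists l1. split; [exact Hl1|].
  apply (lim_pinfty_abs_le _ l1 _ Hl1). exists 1. intros x Hx.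
  specialize (Hinc 1 x ltac:(lra)). rewrite RInt1_at_1, Rminus_0_r in Hinc.
  assert (exp (- (1) / 2) <= 1) by (rewrite <- exp_0 at 2; apply exp_le; lra).
  pose proof (He (-x/2)). nra.
Qed.

End PrimitiveOnPositiveReals.

(** * The denominator L(t) = -ln(1 - e^{-t}) *)

Definition denom (t : R) : R := - ln (1 - exp (- t)).

Lemma fE_denom t : fE t = exp (- t) / denom t.
Proof. reflexivity. Qed.

Lemma exp_neg_bounds t : 0 < t -> 0 < exp (- t) < 1.
Proof. intros Ht. split; [apply exp_pos|]. rewrite <- exp_0. apply exp_increasing. lra. Qed.

Lemma one_sub_exp_neg_le t : 1 - exp (- t) <= t.
Proof. pose proof (exp_ineq1_le (- t)). lra. Qed.

Lemma neg_ln_one_sub_bounds u : 0 < u < 1 -> u <= - ln (1 - u) <= u / (1 - u).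
Proof.
  intros Hu. split.
  - pose proof (ln_le_sub1 (1 - u) ltac:(lra)). lra.
  - rewrite <- ln_Rinv by lra.
    pose proof (ln_le_sub1 (/ (1 - u)) ltac:(apply Rinv_0_lt_compat; lra)).
    replace (u / (1 - u)) with (/ (1 - u) - 1) by (field; lra). lra.
Qed.

Lemma neg_ln_one_sub_expansion u : 0 < u <= 1/2 ->
  u + u^2/2 <= - ln (1 - u) <= u + u^2/2 + u^3.
Proof.
  intros Hu. split.
  - set (phi := fun s => - ln (1 - s) - s - s^2/2).
    assert (H : phi 0 <= phi u).
    { apply (nondecreasing_of_derive phi (fun s => s^2 / (1 - s)) 0 u); [lra | |].
      - intros x Hx. unfold phi. auto_derive; [lra|]. field. lra.
      - intros x Hx. apply Rdiv_le_0_compat; [nra | lra]. }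
    unfold phi in H. cbv beta in H. rewrite !Rminus_0_r, ln_1 in H. nra.
  - set (phi := fun s => s + s^2/2 + s^3 + ln (1 - s)).
    assert (H : phi 0 <= phi u).
    { apply (nondecreasing_of_derive phi (fun s => s^2 * (2 - 3 * s) / (1 - s)) 0 u);
        [lra | |].
      - intros x Hx. unfold phi. auto_derive; [lra|]. field. lra.
      - intros x Hx. apply Rdiv_le_0_compat; [nra | lra]. }
    unfold phi in H. cbv beta in H. rewrite !Rminus_0_r, ln_1 in H. nra.
Qed.

Lemma denom_bounds t : 0 < t -> exp (- t) <= denom t <= exp (- t) / (1 - exp (- t)).
Proof. intros Ht. exact (neg_ln_one_sub_bounds _ (exp_neg_bounds t Ht)). Qed.

Lemma denom_pos t : 0 < t -> 0 < denom t.
Proof. intros Ht. pose proof (exp_neg_bounds t Ht). pose proof (denom_bounds t Ht). lra. Qed.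

Lemma denom_ge_neg_ln t : 0 < t -> - ln t <= denom t.
Proof.
  intros Ht. pose proof (exp_neg_bounds t Ht). pose proof (one_sub_exp_neg_le t).
  apply Ropp_le_contravar, ln_le; lra.
Qed.

Lemma denom_derive t : 0 < t -> is_derive denom t (- (exp (- t) / (1 - exp (- t)))).
Proof.
  intros Ht. pose proof (exp_neg_bounds t Ht). unfold denom.
  auto_derive; [lra|]. field. lra.
Qed.

Lemma exp_neg_small e : 0 < e ->
  exists M, forall x, M < x -> 0 < exp (- x) <= 1/2 /\ exp (- x) < e.
Proof.
  intros He. exists (Rmax (ln 2) (- ln e)). intros x Hx.
  pose proof (Rmax_l (ln 2) (- ln e)). pose proof (Rmax_r (ln 2) (- ln e)).
  split; [split|].
  - apply exp_pos.
  - replace (1/2) with (exp (- ln 2)) by (rewrite exp_Ropp, exp_ln; lra).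
    apply exp_le. lra.
  - rewrite <- (exp_ln e) by lra. apply exp_increasing. lra.
Qed.

Lemma neg_exp_neg_lim_0 : filterlim (fun x => - exp (- x)) (at_right 0) (locally (-1)).
Proof.
  apply lim_right0_iff. intros eps Heps. exists eps. split; auto.
  intros x Hx. pose proof (one_sub_exp_neg_le x). pose proof (exp_neg_bounds x ltac:(lra)).
  rewrite Rabs_pos_eq; lra.
Qed.

Lemma neg_exp_neg_lim_infty :
  filterlim (fun x => - exp (- x)) (Rbar_locally p_infty) (locally 0).
Proof.
  apply lim_pinfty_iff. intros eps Heps.
  destruct (exp_neg_small eps Heps) as [M HM]. exists M. intros x Hx.
  destruct (HM x Hx). rewrite Rminus_0_r, Rabs_Ropp, Rabs_pos_eq; lra.
Qed.

Lemma Rabs_div_lt N D eps : 0 < D -> Rabs N < eps * D -> Rabs (N / D) < eps.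
Proof.
  intros HD H. unfold Rdiv. rewrite Rabs_mult, Rabs_inv, (Rabs_pos_eq D) by lra.
  apply (Rmult_lt_reg_r D); [lra|]. rewrite Rmult_assoc, Rinv_l by lra. lra.
Qed.

(* f' = u (u/(1-u) - L) / L^2 >= 0 by the upper first-order bound. *)
Lemma fE_nondecreasing x y : 0 < x -> x <= y -> fE x <= fE y.
Proof.
  intros Hx Hxy.
  apply (nondecreasing_of_derive fE
           (fun t => exp (- t) * (exp (- t) / (1 - exp (- t)) - denom t) / (denom t)^2) x y Hxy).
  - intros t Ht. pose proof (exp_neg_bounds t ltac:(lra)). pose proof (denom_pos t ltac:(lra)).
    unfold fE, denom, Rminus in *. auto_derive.
    + repeat split; lra.
    + field. split; lra.
  - intros t Ht. pose proof (exp_neg_bounds t ltac:(lra)). pose proof (denom_pos t ltac:(lra)).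
    pose proof (denom_bounds t ltac:(lra)).
    apply Rdiv_le_0_compat; [apply Rmult_le_pos|]; nra.
Qed.

(* f <= 1/L <= 1/(-ln t) near 0. *)
Lemma fE_lim_0 : filterlim fE (at_right 0) (locally 0).
Proof.
  apply lim_right0_iff. intros eps Heps.
  exists (exp (- / eps)). split; [apply exp_pos|].
  intros x [Hx0 Hx]. pose proof (exp_neg_bounds x Hx0). pose proof (denom_pos x Hx0).
  pose proof (denom_ge_neg_ln x Hx0).
  assert (ln x < - / eps) by (rewrite <- (ln_exp (- / eps)); apply ln_increasing; lra).
  rewrite Rminus_0_r, fE_denom, Rabs_pos_eq by (apply Rlt_le, Rdiv_lt_0_compat; lra).
  apply Rlt_le_trans with (/ denom x).
  - unfold Rdiv. assert (0 < / denom x) by (apply Rinv_0_lt_compat; lra). nra.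
  - rewrite <- (Rinv_inv eps). apply Rlt_le, Rinv_lt_contravar; [|lra].
    apply Rmult_lt_0_compat; [apply Rinv_0_lt_compat|]; lra.
Qed.

Lemma fE_lim_infty : is_lim fE p_infty 1.
Proof.
  apply lim_pinfty_iff. intros eps Heps.
  destruct (exp_neg_small eps Heps) as [M HM]. exists (Rmax M 0). intros x Hx.
  pose proof (Rmax_l M 0). pose proof (Rmax_r M 0).
  destruct (HM x ltac:(lra)) as [Hu Hue].
  rewrite fE_denom. unfold denom. set (u := exp (- x)) in *.
  pose proof (neg_ln_one_sub_expansion u ltac:(lra)).
  set (L := - ln (1 - u)) in *.
  replace (u / L - 1) with ((u - L) / L) by (field; nra).
  apply Rabs_div_lt; [nra|]. rewrite Rabs_left1 by nra. nra.
Qed.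

(* 1 - f = (L - u)/L and L - u = u^2/2 + O(u^3), so (1 - f)/(u/2) -> 1. *)
Lemma fE_one_sub_equiv : is_lim (fun t => (1 - fE t) / (exp (- t) / 2)) p_infty 1.
Proof.
  apply lim_pinfty_iff. intros eps Heps.
  destruct (exp_neg_small (eps/3) ltac:(lra)) as [M HM]. exists (Rmax M 0). intros x Hx.
  pose proof (Rmax_l M 0). pose proof (Rmax_r M 0).
  destruct (HM x ltac:(lra)) as [Hu Hue].
  rewrite fE_denom. unfold denom. set (u := exp (- x)) in *.
  pose proof (neg_ln_one_sub_expansion u ltac:(lra)).
  set (L := - ln (1 - u)) in *.
  set (e := L - u - u^2/2).
  assert (He : 0 <= e <= u^3) by (unfold e; lra).
  replace ((1 - u / L) / (u / 2) - 1) with ((2 * e - u^3/2 - u * e) / (u * L))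
    by (unfold e; field; split; nra).
  apply Rabs_div_lt; [nra|].
  assert (Rabs (2 * e - u ^ 3 / 2 - u * e) <= 3 * u^3) by (apply Rabs_le; split; nra).
  assert (u * u <= u * L) by nra.
  assert (0 < (eps - 3 * u) * (u * u)) by (apply Rmult_lt_0_compat; nra).
  assert (0 <= eps * (u * L - u * u)) by (apply Rmult_le_pos; lra).
  nra.
Qed.

(** * The exponential integral E(y) = int_1^y e^{-s}/s ds *)

Definition expint_density (s : R) : R := exp (- s) / s.
Definition E1 : R -> R := RInt expint_density 1.
(* E(y) - ln y, which stays bounded as y -> 0+. *)
Definition E1_reg (y : R) : R := E1 y - ln y.

Lemma expint_density_continuous t : 0 < t -> continuous expint_density t.
Proof.
  intros Ht. apply (ex_derive_continuous (K:=R_AbsRing) (V:=R_NormedModule)).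
  unfold expint_density. auto_derive. lra.
Qed.

Lemma E1_derive y : 0 < y -> is_derive E1 y (expint_density y).
Proof. apply RInt1_derive, expint_density_continuous. Qed.

Lemma E1_reg_derive y : 0 < y -> is_derive E1_reg y ((exp (- y) - 1) / y).
Proof.
  intros Hy. unfold E1_reg.
  replace ((exp (- y) - 1) / y) with (expint_density y - / y)
    by (unfold expint_density; field; lra).
  apply (is_derive_minus (K := R_AbsRing) (V := R_NormedModule) E1 ln y).
  - apply E1_derive; auto.
  - apply is_derive_Reals, derivable_pt_lim_ln; auto.
Qed.

(* E1_reg is 1-Lipschitz on (0, +oo), since |(e^{-y} - 1)/y| <= 1; hence it has a limit at 0+. *)
Lemma E1_reg_lim_0 : exists c0, filterlim E1_reg (at_right 0) (locally c0).
Proof.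
  apply cauchy_right0. intros eps Heps.
  assert (Hlip : forall x y, 0 < x <= y -> Rabs (E1_reg y - E1_reg x) <= y - x).
  { intros x y Hxy.
    apply (is_RInt_abs_le_primitive (fun s => (exp (- s) - 1) / s) (fun _ => 1) (fun s => s) x y);
      try lra.
    - apply (is_RInt_derive E1_reg); rewrite Rmin_left, Rmax_right by lra; intros t Ht.
      + apply E1_reg_derive; lra.
      + apply (ex_derive_continuous (K:=R_AbsRing) (V:=R_NormedModule)). auto_derive. lra.
    - intros t Ht. pose proof (one_sub_exp_neg_le t). pose proof (exp_neg_bounds t ltac:(lra)).
      rewrite Rabs_div, (Rabs_pos_eq t), Rabs_left1 by lra.
      apply Rle_div_l; lra.
    - intros t Ht. auto_derive; auto.
    - intros t Ht. apply continuous_const. }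
  exists eps. split; auto. intros x y Hx Hy.
  destruct (Rle_or_lt x y) as [Hxy|Hxy].
  - specialize (Hlip x y ltac:(lra)). rewrite Rabs_minus_sym. lra.
  - specialize (Hlip y x ltac:(lra)). lra.
Qed.

(* e^{-s}/s <= e^{-s} on [1, +oo), so E has a limit at +oo. *)
Lemma E1_lim_infty : exists cinf, filterlim E1 (Rbar_locally p_infty) (locally cinf).
Proof.
  apply cauchy_pinfty. intros eps Heps.
  assert (Htail : forall x y, 1 <= x <= y -> Rabs (E1 y - E1 x) <= exp (- x) - exp (- y)).
  { intros x y Hxy.
    replace (exp (- x) - exp (- y)) with (- exp (- y) - - exp (- x)) by ring.
    apply (is_RInt_abs_le_primitive expint_density (fun s => exp (- s))
             (fun s => - exp (- s)) x y); try lra.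
    - apply RInt1_is_RInt; [apply expint_density_continuous | lra | lra].
    - intros t Ht. unfold expint_density. pose proof (exp_pos (- t)).
      rewrite Rabs_div, (Rabs_pos_eq t), Rabs_pos_eq by lra.
      apply Rle_div_l; nra.
    - intros t Ht. auto_derive; auto. ring.
    - intros t Ht. apply (ex_derive_continuous (K:=R_AbsRing) (V:=R_NormedModule)).
      auto_derive. auto. }
  exists (Rmax 1 (- ln eps)). intros x y Hx Hy.
  pose proof (Rmax_l 1 (- ln eps)). pose proof (Rmax_r 1 (- ln eps)).
  assert (Hsmall : forall z, Rmax 1 (- ln eps) < z -> exp (- z) < eps).
  { intros z Hz. rewrite <- (exp_ln eps) by lra. apply exp_increasing. lra. }
  pose proof (exp_pos (- x)). pose proof (exp_pos (- y)).
  pose proof (Hsmall x Hx). pose proof (Hsmall y Hy).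
  destruct (Rle_or_lt x y) as [Hxy|Hxy].
  - specialize (Htail x y ltac:(lra)). rewrite Rabs_minus_sym. lra.
  - specialize (Htail y x ltac:(lra)). lra.
Qed.

(** * A primitive of 1 - f *)

(* Since e^{-L} = 1 - u and L' = -u/(1-u), (E o L)' = e^{-L}/L * L' = -u/L = -f. *)
Definition one_sub_fE_prim (x : R) : R := x + E1 (denom x).

Lemma exp_neg_denom x : 0 < x -> exp (- denom x) = 1 - exp (- x).
Proof.
  intros Hx. pose proof (exp_neg_bounds x Hx). unfold denom.
  rewrite Ropp_involutive, exp_ln; lra.
Qed.

Lemma one_sub_fE_prim_derive x : 0 < x -> is_derive one_sub_fE_prim x (1 - fE x).
Proof.
  intros Hx. pose proof (exp_neg_bounds x Hx). pose proof (denom_pos x Hx).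
  replace (1 - fE x) with (1 + (- (exp (- x) / (1 - exp (- x)))) * expint_density (denom x)).
  - apply (is_derive_plus (K:=R_AbsRing) (V:=R_NormedModule) (fun x => x) (fun x => E1 (denom x))).
    + apply (is_derive_id (K:=R_AbsRing)).
    + apply (is_derive_comp E1 denom x); [apply E1_derive | apply denom_derive]; auto.
  - unfold expint_density. rewrite exp_neg_denom, fE_denom by auto. field. split; lra.
Qed.

Lemma one_sub_fE_continuous t : 0 < t -> continuous (fun t => 1 - fE t) t.
Proof.
  intros Ht. pose proof (exp_neg_bounds t Ht). pose proof (denom_pos t Ht).
  apply (ex_derive_continuous (K:=R_AbsRing) (V:=R_NormedModule)).
  unfold fE, denom, Rminus in *. auto_derive. repeat split; lra.
Qed.

Section LimitsOfPrimitives.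

Variables c0 cinf : R.
Hypothesis E1_reg_lim : filterlim E1_reg (at_right 0) (locally c0).
Hypothesis E1_lim : filterlim E1 (Rbar_locally p_infty) (locally cinf).

(* As x -> 0+, L(x) -> +oo. *)
Lemma one_sub_fE_prim_lim_0 : filterlim one_sub_fE_prim (at_right 0) (locally cinf).
Proof.
  apply lim_right0_iff. intros eps Heps.
  destruct (proj1 (lim_pinfty_iff E1 cinf) E1_lim (eps/2) ltac:(lra)) as [M HM].
  exists (Rmin (eps/2) (exp (- M))). split; [apply Rmin_glb_lt; [lra | apply exp_pos]|].
  intros x [Hx0 Hx].
  pose proof (Rmin_l (eps/2) (exp (- M))). pose proof (Rmin_r (eps/2) (exp (-M))).
  pose proof (denom_ge_neg_ln x Hx0).
  assert (ln x < - M) by (rewrite <- (ln_exp (- M)); apply ln_increasing; lra).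
  specialize (HM (denom x) ltac:(lra)). unfold one_sub_fE_prim.
  revert HM. split_Rabs; lra.
Qed.

(* As x -> +oo, L(x) -> 0+ and x + ln L(x) = ln (L/u) -> 0, so x + E(L) ~ E(L) - ln L -> c0. *)
Lemma one_sub_fE_prim_lim_infty :
  filterlim one_sub_fE_prim (Rbar_locally p_infty) (locally c0).
Proof.
  apply lim_pinfty_iff. intros eps Heps.
  destruct (proj1 (lim_right0_iff E1_reg c0) E1_reg_lim (eps/2) ltac:(lra)) as [d [Hd Hreg]].
  destruct (exp_neg_small (Rmin (d/2) (eps/4)) ltac:(apply Rmin_glb_lt; lra)) as [M HM].
  exists (Rmax M 0). intros x Hx. pose proof (Rmax_l M 0). pose proof (Rmax_r M 0).
  destruct (HM x ltac:(lra)) as [Hu Hue].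
  pose proof (Rmin_l (d/2) (eps/4)). pose proof (Rmin_r (d/2) (eps/4)).
  pose proof (denom_bounds x ltac:(lra)) as HL. pose proof (denom_pos x ltac:(lra)).
  assert (Hlnu : ln (exp (- x)) = - x) by apply ln_exp.
  set (u := exp (- x)) in *.
  assert (HL2 : denom x <= 2 * u).
  { assert (u / (1 - u) <= 2 * u) by (apply Rle_div_l; nra). lra. }
  assert (Hln_lo : 0 <= x + ln (denom x)).
  { pose proof (ln_le u (denom x) ltac:(lra) ltac:(lra)). lra. }
  assert (Hln_hi : x + ln (denom x) <= denom x).
  { pose proof (ln_le (denom x) (u * / (1 - u)) ltac:(lra) ltac:(unfold Rdiv in HL; lra)) as Hq.
    rewrite ln_mult, ln_Rinv in Hq by (try apply Rinv_0_lt_compat; lra).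
    assert (denom x = - ln (1 - u)) by reflexivity. lra. }
  specialize (Hreg (denom x) ltac:(lra)). unfold E1_reg in Hreg. unfold one_sub_fE_prim.
  revert Hreg. split_Rabs; lra.
Qed.

Theorem integral_one_sub_fE :
  is_RInt_gen (fun t => 1 - fE t) (at_right 0) (Rbar_locally p_infty) (c0 - cinf).
Proof.
  apply (is_RInt_gen_primitive _ one_sub_fE_prim).
  - intros a b Ha Hb. assert (0 < Rmin a b) by (apply Rmin_glb_lt; lra).
    apply (is_RInt_derive one_sub_fE_prim); intros x Hx.
    + apply one_sub_fE_prim_derive. lra.
    + apply one_sub_fE_continuous. lra.
  - exact one_sub_fE_prim_lim_0.
  - exact one_sub_fE_prim_lim_infty.
Qed.

End LimitsOfPrimitives.

(** * Expansion of Gamma near 1 *)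

(* t^h e^{-t} = e^{-t} + h ln t e^{-t} + remainder, the remainder being O(h^2). *)
Definition gamma_remainder (h t : R) : R :=
  exp (h * ln t) * exp (- t) - exp (- t) - h * (ln t * exp (- t)).

Lemma gamma_remainder_continuous h t : 0 < t -> continuous (gamma_remainder h) t.
Proof.
  intros Ht. apply (ex_derive_continuous (K:=R_AbsRing) (V:=R_NormedModule)).
  unfold gamma_remainder. auto_derive. lra.
Qed.

Lemma gamma_remainder_bound h t : 0 < t -> Rabs h <= 1/4 ->
  Rabs (gamma_remainder h t) <= exp (- t) * (h^2 * (ln t)^2 * exp (Rabs (ln t) / 4)).
Proof.
  intros Ht Hh. unfold gamma_remainder.
  replace (exp (h * ln t) * exp (- t) - exp (- t) - h * (ln t * exp (- t)))
    with (exp (- t) * (exp (h * ln t) - 1 - h * ln t)) by ring.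
  rewrite Rabs_mult, (Rabs_pos_eq (exp (- t))) by (left; apply exp_pos).
  apply Rmult_le_compat_l; [left; apply exp_pos|].
  eapply Rle_trans; [apply exp_taylor2|].
  replace ((h * ln t)^2) with (h^2 * (ln t)^2) by ring.
  apply Rmult_le_compat_l; [nra|].
  apply exp_le. rewrite Rabs_mult. pose proof (Rabs_pos (ln t)). nra.
Qed.

(* On (0, 1] with z = -ln t: z^2 e^{z/4} <= 32 e^{z/2} = 32 / sqrt t. *)
Lemma gamma_remainder_bound_0 h t : 0 < t <= 1 -> Rabs h <= 1/4 ->
  Rabs (gamma_remainder h t) <= 32 * h^2 / sqrt t.
Proof.
  intros Ht Hh. eapply Rle_trans; [apply gamma_remainder_bound; lra|].
  assert (Hz : ln t <= 0) by (rewrite <- ln_1; apply ln_le; lra).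
  rewrite Rabs_left1 by lra.
  set (z := - ln t) in *.
  replace ((ln t)^2) with (z^2) by (unfold z; ring).
  pose proof (sq_le_exp z ltac:(unfold z; lra)).
  assert (Hsqrt : / sqrt t = exp (z / 4) * exp (z / 4)).
  { rewrite sqrt_exp, <- exp_Ropp, <- exp_plus by lra. f_equal. unfold z. field. }
  unfold Rdiv. rewrite Hsqrt.
  assert (exp (- t) <= 1) by (pose proof (exp_neg_bounds t ltac:(lra)); lra).
  pose proof (exp_pos (z/4)). pose proof (exp_pos (- t)). pose proof (pow2_ge_0 h).
  assert (0 <= h ^ 2 * z ^ 2 * exp (z / 4)) by (pose proof (pow2_ge_0 z); apply Rmult_le_pos; nra).
  apply Rle_trans with (h ^ 2 * z ^ 2 * exp (z / 4)); [nra|].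
  replace (h ^ 2 * z ^ 2 * exp (z / 4)) with (h^2 * (z^2 * exp (z/4))) by ring.
  replace (32 * h ^ 2 * (exp (z / 4) * exp (z / 4))) with (h^2 * (32 * exp (z/4) * exp (z/4)))
    by ring.
  apply Rmult_le_compat_l; [nra|]. apply Rmult_le_compat_r; lra.
Qed.

(* On [1, +oo): (ln t)^2 e^{ln t / 4} <= t^2 e^{t/4} <= 32 e^{t/2}. *)
Lemma gamma_remainder_bound_infty h t : 1 <= t -> Rabs h <= 1/4 ->
  Rabs (gamma_remainder h t) <= 32 * h^2 * exp (- t / 2).
Proof.
  intros Ht Hh. eapply Rle_trans; [apply gamma_remainder_bound; lra|].
  assert (Hz : 0 <= ln t) by (rewrite <- ln_1; apply ln_le; lra).
  pose proof (ln_le_sub1 t ltac:(lra)).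
  rewrite Rabs_pos_eq by lra.
  assert ((ln t)^2 <= t^2) by nra.
  pose proof (sq_le_exp t ltac:(lra)).
  assert (exp (ln t / 4) <= exp (t / 4)) by (apply exp_le; lra).
  assert (E : exp (- t / 2) = exp (- t) * exp (t/4) * exp (t/4))
    by (rewrite <- !exp_plus; f_equal; field).
  pose proof (exp_pos (ln t / 4)). pose proof (exp_pos (t/4)). pose proof (exp_pos (- t)).
  pose proof (pow2_ge_0 h).
  rewrite E.
  replace (32 * h ^ 2 * (exp (- t) * exp (t / 4) * exp (t / 4)))
    with (exp (- t) * (h^2 * (32 * exp (t/4)) * exp (t/4))) by ring.
  apply Rmult_le_compat_l; [lra|].
  apply Rmult_le_compat; [nra | lra | | lra].
  apply Rmult_le_compat_l; nra.
Qed.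

(* A primitive of t -> ln t e^{-t}: E(x) - e^{-x} ln x. *)
Definition ln_exp_prim (x : R) : R := E1 x - exp (- x) * ln x.

Lemma ln_exp_prim_derive x : 0 < x -> is_derive ln_exp_prim x (exp (- x) * ln x).
Proof.
  intros Hx. unfold ln_exp_prim.
  replace (exp (- x) * ln x) with (expint_density x - (- exp (- x) * ln x + exp (- x) / x))
    by (unfold expint_density; field; lra).
  apply (is_derive_minus (K:=R_AbsRing) (V:=R_NormedModule) E1 (fun x => exp (- x) * ln x)).
  - apply E1_derive; auto.
  - auto_derive; [lra|]. field. lra.
Qed.

(* A primitive of the Gamma integrand t^h e^{-t}, split along the expansion above. *)
Definition gamma_integrand_prim (h x : R) : R :=
  - exp (- x) + h * ln_exp_prim x + RInt (gamma_remainder h) 1 x.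

Lemma gamma_integrand_prim_derive h x : 0 < x ->
  is_derive (gamma_integrand_prim h) x (Rpower x (1 + h - 1) * exp (- x)).
Proof.
  intros Hx.
  replace (Rpower x (1 + h - 1) * exp (- x))
    with (exp (- x) + h * (exp (- x) * ln x) + gamma_remainder h x)
    by (unfold gamma_remainder, Rpower; replace (1 + h - 1) with h by ring; ring).
  apply (is_derive_plus (K:=R_AbsRing) (V:=R_NormedModule)).
  - apply (is_derive_plus (K:=R_AbsRing) (V:=R_NormedModule)).
    + auto_derive; auto. ring.
    + apply is_derive_scal, ln_exp_prim_derive, Hx.
  - apply RInt1_derive; [apply gamma_remainder_continuous | exact Hx].
Qed.

Section GammaNear1.

Variables c0 cinf : R.
Hypothesis E1_reg_lim : filterlim E1_reg (at_right 0) (locally c0).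
Hypothesis E1_lim : filterlim E1 (Rbar_locally p_infty) (locally cinf).

Lemma ln_exp_prim_lim_infty : filterlim ln_exp_prim (Rbar_locally p_infty) (locally cinf).
Proof.
  apply lim_pinfty_iff. intros eps Heps.
  destruct (proj1 (lim_pinfty_iff E1 cinf) E1_lim (eps/2) ltac:(lra)) as [M HM].
  set (M' := Rmax (Rmax M 1) (- 2 * ln (eps / 4))).
  exists M'. intros x Hx.
  pose proof (Rmax_l (Rmax M 1) (- 2 * ln (eps / 4))).
  pose proof (Rmax_r (Rmax M 1) (- 2 * ln (eps / 4))).
  pose proof (Rmax_l M 1). pose proof (Rmax_r M 1). fold M' in H, H0.
  specialize (HM x ltac:(lra)).
  assert (Hl0 : 0 <= ln x) by (rewrite <- ln_1; apply ln_le; lra).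
  assert (Hlx : ln x <= x) by (pose proof (ln_le_sub1 x ltac:(lra)); lra).
  assert (Hx2 : x <= 2 * exp (x / 2)) by (pose proof (exp_ineq1_le (x/2)); lra).
  assert (E : exp (- x) * exp (x / 2) = exp (- x / 2)) by (rewrite <- exp_plus; f_equal; field).
  assert (exp (- x / 2) < eps / 4).
  { rewrite <- (exp_ln (eps / 4)) by lra. apply exp_increasing. lra. }
  pose proof (exp_pos (- x)).
  assert (exp (- x) * ln x <= eps / 2).
  { apply Rle_trans with (2 * (exp (- x) * exp (x / 2))); [nra|]. lra. }
  assert (0 <= exp (- x) * ln x) by (apply Rmult_le_pos; lra).
  unfold ln_exp_prim. revert HM. split_Rabs; lra.
Qed.

(* Near 0+: E(x) - e^{-x} ln x = E1_reg x + (1 - e^{-x}) ln x, and |x ln x| <= 2 sqrt x. *)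
Lemma ln_exp_prim_lim_0 : filterlim ln_exp_prim (at_right 0) (locally c0).
Proof.
  apply lim_right0_iff. intros eps Heps.
  destruct (proj1 (lim_right0_iff E1_reg c0) E1_reg_lim (eps/2) ltac:(lra)) as [d [Hd Hreg]].
  exists (Rmin (Rmin 1 d) ((eps/4) * (eps/4))).
  split; [apply Rmin_glb_lt; [apply Rmin_glb_lt|]; nra|].
  intros x [Hx0 Hx]. pose proof (Rmin_l (Rmin 1 d) ((eps/4) * (eps/4))).
  pose proof (Rmin_r (Rmin 1 d) ((eps/4) * (eps/4))). pose proof (Rmin_l 1 d).
  pose proof (Rmin_r 1 d).
  specialize (Hreg x ltac:(lra)).
  assert (Hsq : sqrt x < eps / 4) by (apply sqrt_lt_of_lt_sq; lra).
  assert (Hsp : 0 < sqrt x) by (apply sqrt_lt_R0; lra).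
  assert (Hxx : sqrt x * sqrt x = x) by (apply sqrt_sqrt; lra).
  assert (Hln : - ln x <= 2 / sqrt x).
  { assert (E : ln (/ sqrt x) = - ln x / 2).
    { rewrite ln_Rinv, sqrt_exp, ln_exp by lra. field. }
    pose proof (ln_le_sub1 (/ sqrt x) ltac:(apply Rinv_0_lt_compat; lra)).
    unfold Rdiv. lra. }
  assert (Hl0 : ln x <= 0) by (rewrite <- ln_1; apply ln_le; lra).
  pose proof (one_sub_exp_neg_le x). pose proof (exp_neg_bounds x Hx0).
  assert (B : (1 - exp (- x)) * (- ln x) <= 2 * sqrt x).
  { apply Rle_trans with (x * (2 / sqrt x)).
    - apply Rmult_le_compat; lra.
    - rewrite <- Hxx at 1. right. field. lra. }
  assert (0 <= (1 - exp (- x)) * (- ln x)) by (apply Rmult_le_pos; lra).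
  unfold ln_exp_prim. unfold E1_reg in Hreg.
  replace (E1 x - exp (- x) * ln x - c0) with ((E1 x - ln x - c0) + (1 - exp (- x)) * ln x)
    by ring.
  revert Hreg. split_Rabs; lra.
Qed.

(* Integrating term by term: Gamma(1+h) = 1 + h (cinf - c0) + (l1 - l0), where l0, l1 are
   the limits of the primitive of the remainder, each of size at most 64 h^2. *)
Lemma Gamma_quadratic_expansion h : Rabs h <= 1/4 ->
  Rabs (Gamma (1 + h) - 1 - h * (cinf - c0)) <= 128 * h^2.
Proof.
  intros Hh.
  assert (HRc : forall t, 0 < t -> continuous (gamma_remainder h) t)
    by (intros; apply gamma_remainder_continuous; auto).
  destruct (RInt1_lim_right0_dominated (gamma_remainder h) HRc (32 * h^2)) as [l0 [Hl0 Hb0]].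
  { nra. }
  { intros t Ht. apply gamma_remainder_bound_0; auto. }
  destruct (RInt1_lim_pinfty_dominated (gamma_remainder h) HRc (32 * h^2)) as [l1 [Hl1 Hb1]].
  { nra. }
  { intros t Ht. apply gamma_remainder_bound_infty; auto. }
  assert (HG : is_RInt_gen (fun t => Rpower t (1 + h - 1) * exp (- t))
                 (at_right 0) (Rbar_locally p_infty)
                 ((0 + h * cinf + l1) - (-1 + h * c0 + l0))).
  { apply (is_RInt_gen_primitive _ (gamma_integrand_prim h)).
    - intros a b Ha Hb. assert (0 < Rmin a b) by (apply Rmin_glb_lt; lra).
      apply (is_RInt_derive (gamma_integrand_prim h)); intros x Hx.
      + apply gamma_integrand_prim_derive. lra.
      + apply (ex_derive_continuous (K:=R_AbsRing) (V:=R_NormedModule)).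
        unfold Rpower. auto_derive. lra.
    - apply filterlim_Rplus; [apply filterlim_Rplus|]; auto.
      + exact neg_exp_neg_lim_0.
      + apply filterlim_Rmult_l, ln_exp_prim_lim_0.
    - apply filterlim_Rplus; [apply filterlim_Rplus|]; auto.
      + exact neg_exp_neg_lim_infty.
      + apply filterlim_Rmult_l, ln_exp_prim_lim_infty. }
  unfold Gamma. rewrite (is_RInt_gen_unique (V:=R_CompleteNormedModule) _ _ HG).
  replace (0 + h * cinf + l1 - (-1 + h * c0 + l0) - 1 - h * (cinf - c0)) with (l1 - l0) by ring.
  revert Hb0 Hb1. split_Rabs; lra.
Qed.

Lemma Gamma_derive_1 : is_derive Gamma 1 (cinf - c0).
Proof.
  apply (is_derive_of_quadratic_bound Gamma 1 1 (cinf - c0) 128 (1/4)); [lra|].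
  exact Gamma_quadratic_expansion.
Qed.

End GammaNear1.

Theorem lemma1 :
  (forall x y : R, 0 < x -> x <= y -> fE x <= fE y) /\
  filterlim fE (at_right 0) (locally 0) /\
  is_lim fE p_infty 1 /\
  is_lim (fun t => (1 - fE t) / (exp (- t) / 2)) p_infty 1 /\
  is_RInt_gen (fun t => 1 - fE t) (at_right 0) (Rbar_locally p_infty) euler_gamma.
Proof.
  split; [exact fE_nondecreasing|].
  split; [exact fE_lim_0|].
  split; [exact fE_lim_infty|].
  split; [exact fE_one_sub_equiv|].
  destruct E1_reg_lim_0 as [c0 Hc0]. destruct E1_lim_infty as [cinf Hcinf].
  replace euler_gamma with (c0 - cinf).
  - exact (integral_one_sub_fE c0 cinf Hc0 Hcinf).
  - unfold euler_gamma. rewrite (is_derive_unique _ _ _ (Gamma_derive_1 c0 cinf Hc0 Hcinf)).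
    ring.
Qed.
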